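(* Let $(X,\mathcal{A})$ be a measurable space, $f,g\in\mathcal{F}_{[0,1]}^{(X,\mathcal{A})}$ comonotone, and $\star:[0,1]^2\to[0,1]$ continuous, non-decreasing in both arguments and bounded from above by the minimum ($a\star b\le\min(a,b)$). Then for every monotone measure $m$ on $(X,\mathcal{A})$ with $m(X)=1$ and all $\alpha,\beta,\gamma,\lambda,\upsilon,\tau\in(0,\infty)$ with $0<\alpha\lambda\le1$, $\beta\upsilon\ge1$, $\gamma\tau\ge1$, $\lambda\le\tau$ and $\lambda\le\upsilon$, \[ \big[\mathbf{Su}(m,(f\star g)^{\alpha})\big]^{\lambda}\ \ge\ \big[\mathbf{Su}(m,f^{\beta})\big]^{\upsilon}\star\big[\mathbf{Su}(m,g^{\gamma})\big]^{\tau}. \]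
   Context: A monotone measure on $(X,\mathcal{A})$ is $m:\mathcal{A}\to[0,\infty]$ with $m(\emptyset)=0$, $m(X)>0$, $m(A)\le m(B)$ for $A\subseteq B$. $\mathcal{F}_{[0,1]}^{(X,\mathcal{A})}$ is the set of $\mathcal{A}$-measurable $f:X\to[0,1]$. The Sugeno integral is $\mathbf{Su}(m,f)=\sup\{\min(t,m(\{f\ge t\})) : t\in(0,\infty]\}$. $f,g$ are comonotone if $(f(x)-f(y))(g(x)-g(y))\ge0$ for all $x,y$. Operations on functions are pointwise. *)

From HB Require Import structures.
From mathcomp Require Import all_boot all_order all_algebra.
From mathcomp Require Import all_classical all_reals all_analysis.
Set Implicit Arguments. Unset Strict Implicit. Unset Printing Implicit Defensive.
Import Order.TTheory GRing.Theory Num.Theory.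
Local Open Scope classical_set_scope.
Local Open Scope ring_scope.

(* monotone measure on (X, A): m(emptyset)=0, m(X)>0, values in [0,oo],
   monotone w.r.t. inclusion of measurable sets. Values on non-measurable
   sets are irrelevant. *)
Definition monotone_measure (d : measure_display) (T : measurableType d)
  (R : realType) (m : set T -> \bar R) : Prop :=
  [/\ m set0 = 0%E,
      (forall A, measurable A -> (0 <= m A)%E),
      (0 < m setT)%E &
      (forall A B, measurable A -> measurable B -> A `<=` B -> (m A <= m B)%E)].

Definition unit_mfun (d : measure_display) (T : measurableType d)
  (R : realType) (f : T -> R) : Prop :=
  measurable_fun setT f /\ (forall x, 0 <= f x <= 1).

Definition comonotone (T : Type) (R : realType) (f g : T -> R) : Prop :=
  forall x y, 0 <= (f x - f y) * (g x - g y).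

Definition sugeno (d : measure_display) (T : measurableType d) (R : realType)
  (m : set T -> \bar R) (f : T -> R) : \bar R :=
  ereal_sup [set Order.min t (m [set x | (t <= (f x)%:E)%E]) | t in [set t : \bar R | (0 < t)%E]].

From HB Require Import structures.
From mathcomp Require Import all_boot all_order all_algebra.
From mathcomp Require Import all_classical all_reals all_analysis.
From mathcomp Require Import measurable_realfun lra.
Import Order.TTheory GRing.Theory Num.Theory numFieldNormedType.Exports.
Local Open Scope classical_set_scope.
Local Open Scope ring_scope.

(* Since m(X) = 1, A ↦ m(A)^λ is again a normalized monotone measure m^λ
   ([powR_measure]), and the exponents can be moved onto it: βυ ≥ 1 and λ ≤ υ
   give Su(m, h^β)^υ ≤ Su(m^λ, h), while αλ ≤ 1 gives Su(m^λ, h) ≤ Su(m, h^α)^λ.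
   It therefore suffices to show Su(μ, f) ⋆ Su(μ, g) ≤ Su(μ, f ⋆ g) for a
   normalized monotone measure μ.  By continuity of ⋆ it is enough to bound
   p ⋆ q for p < Su(μ, f) and q < Su(μ, g); these come with levels r > p and
   s > q such that μ{f ≥ r} > p and μ{g ≥ s} > q.  Comonotonicity makes
   {f ≥ r} and {g ≥ s} nested; on the smaller one f ⋆ g ≥ r ⋆ s, so
   Su(μ, f ⋆ g) ≥ min(r ⋆ s, μ(smaller set)) ≥ p ⋆ q, as p ⋆ q ≤ min(p, q).
   Comonotonicity also makes the level sets of f ⋆ g measurable. *)

Section powR_unit_interval.
Context {R : realType}.
Implicit Types x y r s : R.

Lemma ler_powR2r {r x y} : 0 <= r -> 0 <= x -> x <= y -> x `^ r <= y `^ r.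
Proof.
by move=> r0 x0 xy; apply: ge0_ler_powR; rewrite ?nnegrE // (le_trans x0).
Qed.

Lemma ltr_powR2r {r x y} : 0 < r -> 0 <= x -> x < y -> x `^ r < y `^ r.
Proof.
by move=> r0 x0 xy; apply: gt0_ltr_powR; rewrite ?nnegrE // (le_trans x0) ?ltW.
Qed.

Lemma powR_itv01 {x r} : 0 <= r -> 0 <= x <= 1 -> 0 <= x `^ r <= 1.
Proof.
by move=> r0 /andP[x0 x1]; rewrite powR_ge0 /=; have := ler_powR2r r0 x0 x1; rewrite powR1.
Qed.

Lemma ger_powR01 {x r s} : 0 <= x <= 1 -> 0 < r -> r <= s -> x `^ s <= x `^ r.
Proof.
move=> /andP[x0 x1] r0 rs; have [->|xn0] := eqVneq x 0.
  by rewrite !powR0 ?gt_eqF // (lt_le_trans r0 rs).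
by apply: ger_powR; rewrite // lt_neqAle eq_sym xn0 x0.
Qed.

Lemma powRVK {r x} : 0 < r -> 0 <= x -> (x `^ r^-1) `^ r = x.
Proof. by move=> r0 x0; rewrite -powRrM mulVf ?gt_eqF // powRr1. Qed.

Lemma powRKV {r x} : 0 < r -> 0 <= x -> (x `^ r) `^ r^-1 = x.
Proof. by move=> r0 x0; rewrite -powRrM mulfV ?gt_eqF // powRr1. Qed.

End powR_unit_interval.

Section comonotone.
Context {T : Type} {R : realType} {f g : T -> R}.
Hypothesis fg : comonotone f g.

Lemma comonotone_lt_le x y : f y < f x -> g y <= g x.
Proof. by move=> fyx; have := fg x y; rewrite pmulr_rge0 ?subr_gt0 // subr_ge0. Qed.

Lemma comonotone_level_nested r s :
  [set x | r <= f x] `<=` [set x | s <= g x] \/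
  [set x | s <= g x] `<=` [set x | r <= f x].
Proof.
have [sub|/existsNP[x /not_implyP[/= rfx ngxs]]] :=
  pselect ([set x | r <= f x] `<=` [set x | s <= g x]); [by left|right].
have gxs : g x < s by rewrite ltNge; apply/negP.
move=> y /= sgy; rewrite leNgt; apply/negP => fyr.
have := comonotone_lt_le _ _ (lt_le_trans fyr rfx); rewrite leNgt.
by rewrite (lt_le_trans gxs sgy).
Qed.

End comonotone.

(* Such a [U] is the preimage under [f] of an up-interval, plus possibly the
   part of one fibre of [f] (the one at the infimum of [f] on [U]) that lies in
   the preimage under [g] of an up-interval. *)
Lemma comonotone_upper_measurable {d} {T : measurableType d} {R : realType}
    {f g : T -> R} {U : set T} :
  measurable_fun setT f -> measurable_fun setT g -> comonotone f g ->
  (forall x y, U y -> f y <= f x -> g y <= g x -> U x) -> measurable U.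
Proof.
move=> mf mg fg Uup.
have preimage_itv (h : T -> R) (I : set R) : measurable_fun setT h ->
    is_interval I -> measurable (h @^-1` I).
  by move=> mh iI; rewrite -[_ @^-1` _]setTI; apply: mh => //; exact: is_interval_measurable.
pose A := [set r : R | exists2 y, U y & f y < r].
have iA : is_interval A.
  by move=> r s [y Uy ltr] _ z /andP[rz _]; exists y => //; exact: lt_le_trans rz.
have AU x : A (f x) -> U x.
  by move=> [y Uy lt]; apply: (Uup x y) => //; [exact: ltW | exact: comonotone_lt_le].
have [[x0 Ux0 nAx0]|noex] := pselect (exists2 x0, U x0 & ~ A (f x0)); last first.
  suff -> : U = f @^-1` A by exact: preimage_itv.
  apply/seteqP; split => x; last exact: AU.
  by move=> Ux; apply: contrapT => nA; apply: noex; exists x.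
pose C := [set r : R | exists2 y, U y /\ f y = f x0 & g y <= r].
have iC : is_interval C.
  by move=> r s [y Uy ly] _ z /andP[rz _]; exists y => //; exact: le_trans rz.
suff -> : U = f @^-1` A `|` (f @^-1` [set f x0] `&` g @^-1` C).
  apply: measurableU; first exact: preimage_itv.
  apply: measurableI; last exact: preimage_itv.
  by rewrite -[_ @^-1` _]setTI; apply: mf => //; exact: measurable_set1.
apply/seteqP; split => x; last first.
  by case=> [/AU //|[/= fx [y [Uy fy] gy]]]; apply: (Uup x y); rewrite ?fy ?fx.
move=> Ux; have [Ax|nAx] := pselect (A (f x)); [by left|right].
suff fx : f x = f x0 by split => //=; exists x.
apply/eqP; rewrite eq_le !leNgt; apply/andP; split; apply/negP => lt.
- by apply: nAx; exists x0.
- by apply: nAx0; exists x.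
Qed.

Lemma comonotone_level_measurable {d} {T : measurableType d} {R : realType}
    {f g : T -> R} (k : T -> R) :
  measurable_fun setT f -> measurable_fun setT g -> comonotone f g ->
  (forall x y, f y <= f x -> g y <= g x -> k y <= k x) ->
  forall t, measurable [set x | t <= k x].
Proof.
move=> mf mg fg k_mono t; apply: comonotone_upper_measurable mf mg fg _.
by move=> x y /= tky fyx gyx; exact: le_trans tky (k_mono _ _ fyx gyx).
Qed.

Lemma fineK_itv01 {R : realType} {x : \bar R} : (0 <= x <= 1)%E -> (fine x)%:E = x.
Proof. by case: x => [r| |] //= /andP[_]; rewrite leye_eq. Qed.

Lemma fine_itv01 {R : realType} {x : \bar R} : (0 <= x <= 1)%E -> 0 <= fine x <= 1.
Proof. by move/[dup]/fineK_itv01 => <-. Qed.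

Section normalized_sugeno.
Context {d : measure_display} {X : measurableType d} {R : realType}
  {m : set X -> \bar R}.
Hypotheses (mm : monotone_measure m) (m1 : m setT = 1%E).

Lemma measure_itv01 A : measurable A -> (0 <= m A <= 1)%E.
Proof.
case: mm => _ m_ge0 _ m_mono mA; rewrite m_ge0 //=.
by rewrite -m1 m_mono.
Qed.

Lemma measure_fineK A : measurable A -> (fine (m A))%:E = m A.
Proof. by move/measure_itv01/fineK_itv01. Qed.

Variable h : X -> R.
Hypothesis h_level : forall t, measurable [set x | t <= h x].

Lemma sugeno_levelE (t : R) :
  [set x | (t%:E <= (h x)%:E)%E] = [set x | t <= h x].
Proof. by apply/funext => x; rewrite /= lee_fin. Qed.

Lemma sugeno_level_measurable (t : \bar R) :
  measurable [set x | (t <= (h x)%:E)%E].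
Proof.
case: t => [t||]; first by rewrite sugeno_levelE.
- suff -> : [set x | (+oo <= (h x)%:E)%E] = set0 by exact: measurable0.
  by apply/seteqP; split => x //=; rewrite leye_eq.
- suff -> : [set x | (-oo <= (h x)%:E)%E] = setT by exact: measurableT.
  by apply/seteqP; split => x //= _; exact: leNye.
Qed.

Lemma sugeno_itv01 : (0 <= sugeno m h <= 1)%E.
Proof.
case: mm => _ m_ge0 _ _; apply/andP; split.
  apply: le_ereal_sup_tmp; exists (Order.min 1%E (m [set x | (1 <= (h x)%:E)%E])).
    by exists 1%E => //=; rewrite lte01.
  by rewrite le_min lee01 m_ge0 //; exact: sugeno_level_measurable.
apply: ge_ereal_sup => _ [t _ <-]; rewrite ge_min; apply/orP; right.
by case/andP: (measure_itv01 _ (sugeno_level_measurable t)).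
Qed.

Lemma sugeno_fineK : (fine (sugeno m h))%:E = sugeno m h.
Proof. exact: fineK_itv01 sugeno_itv01. Qed.

Lemma sugeno_gt_level : (forall x, h x <= 1) -> forall q, 0 <= q ->
  q < fine (sugeno m h) ->
  exists r, [/\ q < r, r <= 1 & q < fine (m [set x | r <= h x])].
Proof.
move=> h_le1 q q0; rewrite -lte_fin sugeno_fineK => /ereal_sup_gt[_ [t t_gt0 <-]].
have level_nonempty t' : (q%:E < m [set x | (t' <= (h x)%:E)%E])%E ->
    exists x, (t' <= (h x)%:E)%E.
  move=> qm; apply: contrapT => /forallNP none; move: qm.
  case: mm => m0 _ _ _; rewrite (_ : [set _ | _] = set0) ?m0 ?lte_fin ?ltNge ?q0 //.
  by apply/seteqP; split => x //= /none.
rewrite lt_min => /andP[]; case: t t_gt0 => [r _ qr qm||//]; last first.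
  by move=> _ _ /level_nonempty[x]; rewrite leye_eq.
exists r; split; first by rewrite -lte_fin.
- by have [x] := level_nonempty _ qm; rewrite lee_fin => /le_trans; apply.
- by rewrite -lte_fin measure_fineK // -sugeno_levelE.
Qed.

Lemma sugeno_ge_min (L : set X) (w : R) : measurable L -> L `<=` [set x | w <= h x] ->
  Num.min w (fine (m L)) <= fine (sugeno m h).
Proof.
move=> mL Lw; have [w_le0|w_gt0] := leP w 0.
  rewrite ge_min (le_trans w_le0) // fine_ge0 //.
  by case/andP: sugeno_itv01.
rewrite -lee_fin EFin_min measure_fineK // sugeno_fineK.
apply: le_trans (ereal_sup_ubound _); last by exists w%:E; rewrite ?lte_fin.
rewrite le_min ge_min lexx /= ge_min; apply/orP; right.
by case: mm => _ _ _ m_mono; rewrite m_mono // sugeno_levelE.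
Qed.

End normalized_sugeno.

Definition powR_measure {d} {X : measurableType d} {R : realType}
  (m : set X -> \bar R) (l : R) : set X -> \bar R :=
  fun A => ((fine (m A)) `^ l)%:E.

Section powR_measure.
Context {d : measure_display} {X : measurableType d} {R : realType}
  {m : set X -> \bar R} (l : R).
Hypotheses (mm : monotone_measure m) (m1 : m setT = 1%E) (l_gt0 : 0 < l).

Lemma powR_measure_setT : powR_measure m l setT = 1%E.
Proof. by rewrite /powR_measure m1 /= powR1. Qed.

Lemma powR_measure_monotone : monotone_measure (powR_measure m l).
Proof.
case: (mm) => m0 _ _ _; split => [||| A B mA mB AB].
- by rewrite /powR_measure m0 /= powR0 ?gt_eqF.
- by move=> A _; rewrite lee_fin powR_ge0.
- by rewrite powR_measure_setT lte01.
rewrite lee_fin; apply: ler_powR2r (ltW l_gt0) _ _.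
  by rewrite fine_ge0 //; case/andP: (measure_itv01 mm m1 _ mA).
by rewrite -lee_fin !(measure_fineK mm m1) //; case: mm => _ _ _; apply.
Qed.

End powR_measure.

Section sugeno_powR.
Context {d : measure_display} {X : measurableType d} {R : realType}
  {m : set X -> \bar R}.
Hypotheses (mm : monotone_measure m) (m1 : m setT = 1%E).
Variable h : X -> R.
Hypotheses (h01 : forall x, 0 <= h x <= 1)
           (h_level : forall t, measurable [set x | t <= h x]).

Let h_ge0 x : 0 <= h x. Proof. by case/andP: (h01 x). Qed.
Let h_le1 x : h x <= 1. Proof. by case/andP: (h01 x). Qed.

Lemma powR_levelE b t : 0 < b -> 0 <= t ->
  [set x | t <= h x `^ b] = [set x | t `^ b^-1 <= h x].
Proof.
move=> b0 t0; have bV0 : 0 <= b^-1 by rewrite invr_ge0 ltW.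
apply/seteqP; split => x /= th.
  by rewrite -(powRKV b0 (h_ge0 x)) ler_powR2r.
by rewrite -(powRVK b0 t0) ler_powR2r ?(ltW b0) ?powR_ge0.
Qed.

Lemma powR_level_measurable {b} : 0 < b -> forall t, measurable [set x | t <= h x `^ b].
Proof.
move=> b0 t; have [t_le0|t_gt0] := leP t 0; last by rewrite powR_levelE ?ltW.
suff -> : [set x | t <= h x `^ b] = setT by exact: measurableT.
by apply/seteqP; split => x //= _; rewrite (le_trans t_le0) ?powR_ge0.
Qed.

Lemma sugeno_powR_itv01 {b} : 0 < b -> 0 <= fine (sugeno m (fun x => h x `^ b)) <= 1.
Proof. by move=> b0; exact/fine_itv01/(sugeno_itv01 mm m1)/powR_level_measurable. Qed.

Lemma sugeno_powR_le b u l : 0 < b -> 0 < l -> 1 <= b * u -> l <= u ->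
  fine (sugeno m (fun x => h x `^ b)) `^ u <= fine (sugeno (powR_measure m l) h).
Proof.
move=> b0 l0 bu lu; have u0 : 0 < u by rewrite -(pmulr_rgt0 _ b0) (lt_le_trans ltr01).
have bVu : b^-1 <= u by rewrite -(ler_pM2l b0) mulfV ?gt_eqF.
have hb_le1 x : h x `^ b <= 1 by case/andP: (powR_itv01 (ltW b0) (h01 x)).
have hb_level := powR_level_measurable b0.
set A := fine (sugeno m (fun x => h x `^ b)).
set B := fine (sugeno (powR_measure m l) h).
have /andP[A0 A1] := sugeno_powR_itv01 b0.
have /andP[B0 _] := fine_itv01 (sugeno_itv01 (powR_measure_monotone l mm m1 l0)
  (powR_measure_setT l m1) _ h_level).
suff lt_B p : 0 <= p -> p < A `^ u -> p < B.
  by rewrite leNgt; apply/negP => /(lt_B _ B0); rewrite ltxx.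
move=> p0 pA; set t := p `^ u^-1.
have pE : p = t `^ u by rewrite powRVK.
have tA : t < A by rewrite ltNge; apply: contraTN pA => At; rewrite pE -leNgt ler_powR2r // ltW.
have [r [tr r1 tm]] := sugeno_gt_level mm m1 _ hb_level hb_le1 _ (powR_ge0 _ _) tA.
have r0 : 0 < r := le_lt_trans (powR_ge0 _ _) tr.
rewrite powR_levelE ?ltW // in tm.
apply: lt_le_trans (sugeno_ge_min (powR_measure_monotone l mm m1 l0)
  (powR_measure_setT l m1) _ h_level _ (r `^ b^-1) (h_level _) (fun _ => id)).
rewrite lt_min; apply/andP; split; rewrite pE.
  apply: lt_le_trans (ltr_powR2r u0 (powR_ge0 _ _) tr) _.
  by apply: ger_powR01; rewrite ?invr_gt0 ?(ltW r0).
apply: le_lt_trans (ltr_powR2r l0 (powR_ge0 _ _) tm).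
by apply: ger_powR01; rewrite ?powR_ge0 ?(le_trans (ltW tA)).
Qed.

Lemma sugeno_powR_ge a l : 0 < a -> 0 < l -> a * l <= 1 ->
  fine (sugeno (powR_measure m l) h) <= fine (sugeno m (fun x => h x `^ a)) `^ l.
Proof.
move=> a0 l0 al.
have ha_level := powR_level_measurable a0.
set B := fine (sugeno (powR_measure m l) h).
set C := fine (sugeno m (fun x => h x `^ a)).
suff lt_C p : 0 <= p -> p < B -> p < C `^ l.
  by rewrite leNgt; apply/negP => /(lt_C _ (powR_ge0 _ _)); rewrite ltxx.
move=> p0 pB.
have [r [pr r1 pm]] := sugeno_gt_level (powR_measure_monotone l mm m1 l0)
  (powR_measure_setT l m1) _ h_level h_le1 _ p0 pB.
have r0 : 0 < r := le_lt_trans p0 pr.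
have ra_le := sugeno_ge_min mm m1 _ ha_level _ (r `^ a) (h_level r)
  (fun x rx => ler_powR2r (ltW a0) (ltW r0) rx).
apply: lt_le_trans (ler_powR2r (ltW l0) _ ra_le); last first.
  by rewrite le_min powR_ge0 fine_ge0 //; case/andP: (measure_itv01 mm m1 _ (h_level r)).
set M := fine (m _) in pm *.
have [raM|Mra] := leP (r `^ a) M.
  by rewrite -powRrM (lt_le_trans pr) // ger1_powR ?r0.
exact: pm.
Qed.

End sugeno_powR.

Lemma within_continuous_dist {R : realType} {A : set (R * R)} {F : R * R -> R} {P} :
  {within A, continuous F} -> A P -> forall e, 0 < e ->
  exists2 del, 0 < del & forall p, A p ->
    `|P.1 - p.1| < del -> `|P.2 - p.2| < del -> `|F P - F p| < e.
Proof.
move=> F_cont AP e e0.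
have /cvgrPdist_lt/(_ e e0)/nbhs_ballP[del del0 Fball] : F @ within A (nbhs P) --> F P.
  by have := F_cont P; rewrite /continuous_at /from_subspace nbhs_subspace_in.
by exists del => // p Ap dp1 dp2; exact: Fball.
Qed.

Section star_operation.
Context {R : realType}.
Variable star : R -> R -> R.
Let unit_square := [set p : R * R | 0 <= p.1 <= 1 /\ 0 <= p.2 <= 1].
Hypotheses
  (star_cont : {within unit_square, continuous (fun p : R * R => star p.1 p.2)})
  (star_mono : forall a a' b b', 0 <= a <= 1 -> 0 <= a' <= 1 -> 0 <= b <= 1 ->
     0 <= b' <= 1 -> a <= a' -> b <= b' -> star a b <= star a' b')
  (star_le_min : forall a b, 0 <= a <= 1 -> 0 <= b <= 1 -> star a b <= Num.min a b).

Lemma star_le_of_lt a b c : 0 <= a <= 1 -> 0 <= b <= 1 -> 0 <= c ->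
  (forall p q, 0 <= p -> p < a -> 0 <= q -> q < b -> star p q <= c) ->
  star a b <= c.
Proof.
move=> a01 b01 c0 below.
have [a0|a_gt0] := eqVneq a 0.
  by apply: le_trans (star_le_min _ _ a01 b01) _; rewrite ge_min a0 c0.
have [b0|b_gt0] := eqVneq b 0.
  by apply: le_trans (star_le_min _ _ a01 b01) _; rewrite ge_min b0 c0 orbT.
have {a_gt0} a_gt0 : 0 < a by rewrite lt_neqAle eq_sym a_gt0; case/andP: a01.
have {b_gt0} b_gt0 : 0 < b by rewrite lt_neqAle eq_sym b_gt0; case/andP: b01.
rewrite leNgt; apply/negP => c_lt.
have e0 : 0 < star a b - c by rewrite subr_gt0.
have [del del0 near_ab] := within_continuous_dist (P := (a, b)) star_cont (conj a01 b01) _ e0.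
set p := Num.max 0 (a - del / 2); set q := Num.max 0 (b - del / 2).
have p0 : 0 <= p by rewrite le_max lexx.
have q0 : 0 <= q by rewrite le_max lexx.
have ap : a - del / 2 <= p by rewrite le_max lexx orbT.
have bq : b - del / 2 <= q by rewrite le_max lexx orbT.
have pa : p < a by rewrite gt_max a_gt0 /= ltrBlDr ltrDl divr_gt0.
have qb : q < b by rewrite gt_max b_gt0 /= ltrBlDr ltrDl divr_gt0.
have pq_square : unit_square (p, q).
  case/andP: a01 => _ a1; case/andP: b01 => _ b1.
  by rewrite /unit_square /= p0 q0 (le_trans (ltW pa) a1) (le_trans (ltW qb) b1).
have := below p q p0 pa q0 qb.
have dp : `|a - p| < del by rewrite ger0_norm ?subr_ge0 ?ltW //; lra.
have dq : `|b - q| < del by rewrite ger0_norm ?subr_ge0 ?ltW //; lra.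
have := near_ab (p, q) pq_square dp dq; have := ler_norm (star a b - star p q).
rewrite /=; lra.
Qed.

Section sugeno_star.
Context {d : measure_display} {X : measurableType d} {m : set X -> \bar R}.
Hypotheses (mm : monotone_measure m) (m1 : m setT = 1%E).
Variables f g : X -> R.
Hypotheses (f01 : forall x, 0 <= f x <= 1) (g01 : forall x, 0 <= g x <= 1)
  (fg : comonotone f g)
  (f_level : forall t, measurable [set x | t <= f x])
  (g_level : forall t, measurable [set x | t <= g x])
  (fg_level : forall t, measurable [set x | t <= star (f x) (g x)]).

Theorem sugeno_star_ge :
  star (fine (sugeno m f)) (fine (sugeno m g)) <=
  fine (sugeno m (fun x => star (f x) (g x))).
Proof.
have f_le1 x : f x <= 1 by case/andP: (f01 x).
have g_le1 x : g x <= 1 by case/andP: (g01 x).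
apply: star_le_of_lt.
- exact: fine_itv01 (sugeno_itv01 mm m1 _ f_level).
- exact: fine_itv01 (sugeno_itv01 mm m1 _ g_level).
- by rewrite fine_ge0 //; case/andP: (sugeno_itv01 mm m1 _ fg_level).
move=> p q p0 pA q0 qB.
have [r [pr r1 pm]] := sugeno_gt_level mm m1 _ f_level f_le1 _ p0 pA.
have [s [qs s1 qm]] := sugeno_gt_level mm m1 _ g_level g_le1 _ q0 qB.
have p01 : 0 <= p <= 1 by rewrite p0 (le_trans (ltW pr)).
have q01 : 0 <= q <= 1 by rewrite q0 (le_trans (ltW qs)).
have r01 : 0 <= r <= 1 by rewrite (le_trans p0 (ltW pr)).
have s01 : 0 <= s <= 1 by rewrite (le_trans q0 (ltW qs)).
have via_level L c : measurable L ->
    L `<=` [set x | r <= f x] `&` [set x | s <= g x] ->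
    c < fine (m L) -> star p q <= c ->
    star p q <= fine (sugeno m (fun x => star (f x) (g x))).
  move=> mL Lrs cL pqc.
  have Lrs_star : L `<=` [set x | star r s <= star (f x) (g x)].
    by move=> x /Lrs[/= rf sg]; apply: star_mono.
  apply: le_trans (sugeno_ge_min mm m1 _ fg_level L (star r s) mL Lrs_star).
  by rewrite le_min star_mono ?(ltW pr) ?(ltW qs) // (le_trans pqc (ltW cL)).
have [rs|sr] := comonotone_level_nested fg r s.
- apply: (via_level _ p (f_level r)) => //; first by move=> x rx; split => //; exact: rs.
  by apply: le_trans (star_le_min _ _ p01 q01) _; rewrite ge_min lexx.
- apply: (via_level _ q (g_level s)) => //; first by move=> x sx; split => //; exact: sr.
  by apply: le_trans (star_le_min _ _ p01 q01) _; rewrite ge_min lexx orbT.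
Qed.

End sugeno_star.

End star_operation.

Theorem corollary3p18 (d : measure_display) (X : measurableType d) (R : realType)
  (f g : X -> R) (star : R -> R -> R) :
  unit_mfun f -> unit_mfun g -> comonotone f g ->
  (forall a b, 0 <= a <= 1 -> 0 <= b <= 1 -> 0 <= star a b <= 1) ->
  {within [set p : R * R | 0 <= p.1 <= 1 /\ 0 <= p.2 <= 1],
     continuous (fun p : R * R => star p.1 p.2)} ->
  (forall a a' b b', 0 <= a <= 1 -> 0 <= a' <= 1 -> 0 <= b <= 1 -> 0 <= b' <= 1 ->
     a <= a' -> b <= b' -> star a b <= star a' b') ->
  (forall a b, 0 <= a <= 1 -> 0 <= b <= 1 -> star a b <= Num.min a b) ->
  forall (m : set X -> \bar R), monotone_measure m -> m setT = 1%E ->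
  forall alpha beta gamma lambda upsilon tau : R,
    0 < alpha -> 0 < beta -> 0 < gamma -> 0 < lambda -> 0 < upsilon -> 0 < tau ->
    alpha * lambda <= 1 -> 1 <= beta * upsilon -> 1 <= gamma * tau ->
    lambda <= tau -> lambda <= upsilon ->
    star (fine (sugeno m (fun x => f x `^ beta)) `^ upsilon)
         (fine (sugeno m (fun x => g x `^ gamma)) `^ tau)
    <= fine (sugeno m (fun x => star (f x) (g x) `^ alpha)) `^ lambda.
Proof.
move=> [mf f01] [mg g01] fg star01 star_cont star_mono star_le_min m mm m1
  alpha beta gamma lambda upsilon tau a0 b0 c0 l0 u0 t0 al bu ct l_tau l_ups.
have level := comonotone_level_measurable _ mf mg fg.
have f_level := level f (fun _ _ fyx _ => fyx).
have g_level := level g (fun _ _ _ gyx => gyx).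
have fg_level := level (fun x => star (f x) (g x))
  (fun x y => star_mono _ _ _ _ (f01 y) (f01 x) (g01 y) (g01 x)).
have fg01 x := star01 _ _ (f01 x) (g01 x).
have ml := powR_measure_monotone lambda mm m1 l0.
have ml1 := powR_measure_setT lambda m1.
have pow_fg := sugeno_powR_ge mm m1 _ fg01 fg_level _ _ a0 l0 al.
have star_fg := sugeno_star_ge star star_cont star_mono star_le_min ml ml1
  _ _ f01 g01 fg f_level g_level fg_level.
apply: le_trans (le_trans star_fg pow_fg).
apply: star_mono.
- exact: powR_itv01 (ltW u0) (sugeno_powR_itv01 mm m1 _ f01 f_level b0).
- exact: fine_itv01 (sugeno_itv01 ml ml1 _ f_level).
- exact: powR_itv01 (ltW t0) (sugeno_powR_itv01 mm m1 _ g01 g_level c0).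
- exact: fine_itv01 (sugeno_itv01 ml ml1 _ g_level).
- exact: sugeno_powR_le mm m1 _ f01 f_level _ _ _ b0 l0 bu l_ups.
- exact: sugeno_powR_le mm m1 _ g01 g_level _ _ _ c0 l0 ct l_tau.
Qed.
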